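(* Let $N\ge3$, $\mu\ge0$, let $K$ satisfy (K$\infty$) and $f$ satisfy (F$\infty$), and let $p>p_S(\beta)$. Let $t_1\in\mathbb{R}$ and let $\tilde w\in C^2(t_1,\infty)$ be a positive solution of $$\tilde w''+\tilde a\tilde w'-\tilde A^{p-1}\tilde w+\tilde L(t)\tilde w^p+\mu\tilde g(t)=0\quad(t>t_1)$$ with $0<\limsup_{t\to\infty}\tilde w(t)<\infty$. Then $\lim_{t\to\infty}\tilde w(t)=\tilde\gamma$ and $\lim_{t\to\infty}\tilde w'(t)=0$.
   Context: (K$\infty$): $K:(0,\infty)\to(0,\infty)$ is continuous and $K(r)=(k_\infty+o(1))r^{\beta}$ as $r\to\infty$ for some $\beta>-2$, $k_\infty>0$. (F$\infty$): $f:(0,\infty)\to[0,\infty)$ is continuous and $f(r)=O(r^{-q})$ as $r\to\infty$ for some $q>N$. $p_S(\beta)=\frac{N+2+2\beta}{N-2}$, $\tilde\theta:=\frac{2+\beta}{p-1}$, $\tilde c:=N-2-\tilde\theta$, $\tilde a:=N-2-2\tilde\theta$, $\tilde A:=(\tilde\theta\tilde c)^{1/(p-1)}$, $\tilde\gamma:=k_\infty^{-1/(p-1)}\tilde A$, $\tilde L(t):=e^{-\beta t}K(e^t)$, $\tilde g(t):=e^{(2+\tilde\theta)t}f(e^t)$. (This equation is satisfied by $\tilde w(t)=e^{\tilde\theta t}u(e^t)$ when $u$ solves $u''+\frac{N-1}{r}u'+K(r)u^p+\mu f(r)=0$.) *)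

From Stdlib Require Import Reals.
From Coquelicot Require Import Coquelicot.
Open Scope R_scope.

Definition K_infty (K : R -> R) (beta k_inf : R) : Prop :=
  beta > -2 /\ k_inf > 0 /\
  (forall r, 0 < r -> 0 < K r /\ continuous K r) /\
  (forall eps, eps > 0 -> exists R0, forall r, r > R0 -> r > 0 ->
      Rabs (K r / Rpower r beta - k_inf) <= eps).

Definition F_infty (N : nat) (f : R -> R) : Prop :=
  (forall r, 0 < r -> 0 <= f r /\ continuous f r) /\
  exists q, q > INR N /\
    exists C R0, forall r, r > R0 -> r > 0 -> Rabs (f r) <= C * Rpower r (- q).

Definition p_S (N : nat) (beta : R) : R := (INR N + 2 + 2 * beta) / (INR N - 2).

Definition theta_t (beta p : R) : R := (2 + beta) / (p - 1).
Definition c_t (N : nat) (beta p : R) : R := INR N - 2 - theta_t beta p.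
Definition a_t (N : nat) (beta p : R) : R := INR N - 2 - 2 * theta_t beta p.
Definition A_t (N : nat) (beta p : R) : R :=
  Rpower (theta_t beta p * c_t N beta p) (1 / (p - 1)).
Definition gamma_t (N : nat) (beta p k_inf : R) : R :=
  Rpower k_inf (- (1 / (p - 1))) * A_t N beta p.
Definition L_t (K : R -> R) (beta t : R) : R := exp (- beta * t) * K (exp t).
Definition g_t (f : R -> R) (beta p t : R) : R :=
  exp ((2 + theta_t beta p) * t) * f (exp t).

Definition limsup_pos_finite (w : R -> R) : Prop :=
  (exists M T, forall t, t > T -> w t <= M) /\
  (exists c, c > 0 /\ forall T, exists t, t > T /\ w t >= c).

From Stdlib Require Import Reals Lra Classical.
From Coquelicot Require Import Coquelicot.
Open Scope R_scope.

(* Put [b = A_t^(p-1)], [k = k_inf] and [U(x) = -b x + k x^p].  The equation reads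
   [w'' = -a_t w' - U(w) - e(t)] with [e = (L_t - k_inf) w^p + mu g_t -> 0]: an asymptotically
   autonomous damped oscillator in the potential [V = ∫ U].  [p > p_S(beta)] is exactly what makes
   the damping [a_t] positive, and [V] has its strict minimum on (0,oo) at [gamma_t], the zero of
   [U].  The Lyapunov function [W = w'^2/2 + V(w) + eta w' U(w)] satisfies
   [W' <= -(eta/4) (w'^2 + U(w)^2) + C e^2], so eventually [W] decreases at a fixed rate unless
   [(w, w')] is near [(gamma_t, 0)] or [w] is near [0].  A small sublevel set of [W] around
   [(gamma_t, 0)] traps the solution, and it must be entered: otherwise [w] keeps returning near
   [0], while each rise away from [0], forced by [limsup w > 0], costs a fixed amount of [W]. *)

Definition vanishes (f : R -> R) : Prop :=
  forall eps, 0 < eps -> exists T, forall t, T < t -> Rabs (f t) <= eps.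

Lemma vanishes_plus f h : vanishes f -> vanishes h -> vanishes (fun t => f t + h t).
Proof.
  intros Hf Hh eps Heps.
  destruct (Hf (eps / 2) ltac:(lra)) as [T1 H1]. destruct (Hh (eps / 2) ltac:(lra)) as [T2 H2].
  exists (Rmax T1 T2). intros t Ht.
  pose proof (Rmax_l T1 T2). pose proof (Rmax_r T1 T2).
  eapply Rle_trans; [apply Rabs_triang|].
  specialize (H1 t ltac:(lra)). specialize (H2 t ltac:(lra)). lra.
Qed.

Lemma vanishes_mul_bounded f h B T : vanishes f -> (forall t, T < t -> Rabs (h t) <= B) ->
  vanishes (fun t => f t * h t).
Proof.
  intros Hf Hh eps Heps.
  assert (HB : 0 < Rabs B + 1) by (pose proof (Rabs_pos B); lra).
  destruct (Hf (eps / (Rabs B + 1)) ltac:(apply Rdiv_lt_0_compat; lra)) as [Tf Hf'].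
  exists (Rmax Tf T). intros t Ht.
  pose proof (Rmax_l Tf T). pose proof (Rmax_r Tf T).
  specialize (Hf' t ltac:(lra)). specialize (Hh t ltac:(lra)).
  rewrite Rabs_mult. pose proof (Rle_abs B).
  apply Rle_trans with (eps / (Rabs B + 1) * (Rabs B + 1)); [|right; field; lra].
  apply Rmult_le_compat; [apply Rabs_pos | apply Rabs_pos | lra | lra].
Qed.

Lemma vanishes_exp_decay C kap T f : 0 < kap ->
  (forall t, T < t -> Rabs (f t) <= C * exp (- kap * t)) -> vanishes f.
Proof.
  intros Hkap Hf eps Heps.
  set (C' := Rabs C + 1). assert (HC' : 0 < C') by (unfold C'; pose proof (Rabs_pos C); lra).
  exists (Rmax T (- ln (eps / C') / kap)). intros t Ht.
  pose proof (Rmax_l T (- ln (eps / C') / kap)). pose proof (Rmax_r T (- ln (eps / C') / kap)).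
  assert (Hdecay : exp (- kap * t) < eps / C').
  { rewrite <- (exp_ln (eps / C')) by (apply Rdiv_lt_0_compat; lra). apply exp_increasing.
    assert (- ln (eps / C') < kap * t).
    { apply Rmult_lt_reg_r with (/ kap); [apply Rinv_0_lt_compat, Hkap|].
      replace (kap * t * / kap) with t by (field; lra). unfold Rdiv in *. lra. }
    lra. }
  eapply Rle_trans; [apply Hf; lra|].
  pose proof (exp_pos (- kap * t)). pose proof (Rle_abs C).
  apply Rle_trans with (C' * exp (- kap * t)); [unfold C'; nra|].
  apply Rle_trans with (C' * (eps / C')); [apply Rmult_le_compat_l; lra | right; field; lra].
Qed.

Lemma continuity_pt_ball f x eps : continuity_pt f x -> 0 < eps ->
  exists d, 0 < d /\ forall y, Rabs (y - x) < d -> Rabs (f y - f x) < eps.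
Proof.
  intros Hf Heps. rewrite continuity_pt_locally in Hf.
  destruct (Hf (mkposreal eps Heps)) as [d Hd].
  exists d; split; [apply cond_pos|]. intros y Hy; exact (Hd y Hy).
Qed.

Lemma is_derive_continuity_pt f x l : is_derive f x l -> continuity_pt f x.
Proof.
  intros H. apply continuity_pt_filterlim.
  apply (@ex_derive_continuous R_AbsRing R_NormedModule). exists l; exact H.
Qed.

Lemma first_crossing (phi : R -> R) s t c : s < t ->
  (forall u, s <= u <= t -> continuity_pt phi u) -> phi s < c -> c <= phi t ->
  exists r, s < r <= t /\ phi r = c /\ forall u, s <= u < r -> phi u < c.
Proof.
  intros Hst Hc Hs Ht.
  set (E u := s <= u <= t /\ forall v, s <= v <= u -> phi v < c).
  assert (Es : E s) by (split; [lra | intros v Hv; replace v with s by lra; exact Hs]).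
  destruct (completeness E) as [m [Hub Hlub]]; [exists t; intros x [Hx _]; lra | now exists s |].
  assert (Hsm : s <= m) by (apply Hub; exact Es).
  assert (Hmt : m <= t) by (apply Hlub; intros x [Hx _]; lra).
  assert (Hbelow : forall u, s <= u < m -> phi u < c).
  { intros u Hu. apply NNPP; intros Hn.
    enough (m <= u) by lra. apply Hlub. intros x [Hx Hneg].
    destruct (Rle_dec x u) as [|Hxu]; [easy|]. exfalso; apply Hn, Hneg; lra. }
  assert (Hm_ge : c <= phi m).
  { apply Rnot_lt_le; intros Hneg.
    assert (Hmt' : m < t) by (destruct (Req_dec m t) as [->|]; lra).
    destruct (continuity_pt_ball phi m (c - phi m) (Hc m ltac:(lra)) ltac:(lra)) as [d [Hd Hball]].
    pose proof (Rmin_l (m + d / 2) t). pose proof (Rmin_r (m + d / 2) t).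
    pose proof (Rmin_glb_lt (m + d / 2) t m ltac:(lra) Hmt').
    set (m' := Rmin (m + d / 2) t) in *.
    enough (E m') by (enough (m' <= m) by lra; now apply Hub).
    split; [lra|]. intros v Hv. destruct (Rlt_dec v m); [apply Hbelow; lra|].
    assert (Hvm : Rabs (v - m) < d) by (rewrite Rabs_right; lra).
    specialize (Hball v Hvm). apply Rabs_def2 in Hball. lra. }
  assert (Hm_le : phi m <= c).
  { apply Rnot_lt_le; intros Hpos.
    assert (Hsm' : s < m) by (destruct (Req_dec s m) as [<-|]; lra).
    destruct (continuity_pt_ball phi m (phi m - c) (Hc m ltac:(lra)) ltac:(lra)) as [d [Hd Hball]].
    pose proof (Rmax_l (m - d / 2) s). pose proof (Rmax_r (m - d / 2) s).
    pose proof (Rmax_lub_lt (m - d / 2) s m ltac:(lra) Hsm').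
    set (y := Rmax (m - d / 2) s) in *.
    assert (Hym : Rabs (y - m) < d) by (rewrite Rabs_left; lra).
    specialize (Hball y Hym). apply Rabs_def2 in Hball. specialize (Hbelow y ltac:(lra)). lra. }
  exists m. repeat split; [destruct (Req_dec s m) as [<-|]; lra | lra | lra | exact Hbelow].
Qed.

Lemma last_crossing (phi : R -> R) s t c : s < t ->
  (forall u, s <= u <= t -> continuity_pt phi u) -> phi s <= c -> c < phi t ->
  exists r, s <= r < t /\ phi r = c /\ forall u, r < u <= t -> c < phi u.
Proof.
  intros Hst Hc Hs Ht.
  destruct (first_crossing (fun u => - phi (- u)) (- t) (- s) (- c)) as [r [Hr [Hrc Hbefore]]].
  - lra.
  - intros u Hu. apply continuity_pt_opp with (f := fun u => phi (- u)).
    apply continuity_pt_comp with (f1 := Ropp) (f2 := phi).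
    + apply continuity_pt_opp, continuity_pt_id.
    + apply Hc; lra.
  - rewrite Ropp_involutive; lra.
  - rewrite Ropp_involutive; lra.
  - exists (- r). repeat split; try lra.
    intros u Hu. specialize (Hbefore (- u) ltac:(lra)). rewrite Ropp_involutive in Hbefore. lra.
Qed.

(* [MVT_gen] may pick an endpoint, where [dphi] is not controlled; capping [dphi] at [kap]
   makes the bound hold there too. *)
Lemma derive_le_slope (phi dphi : R -> R) x y kap : x <= y ->
  (forall u, x <= u <= y -> continuity_pt phi u) ->
  (forall u, x < u < y -> is_derive phi u (dphi u) /\ dphi u <= kap) ->
  phi y - phi x <= kap * (y - x).
Proof.
  intros Hxy Hc Hd. destruct (Req_dec x y) as [<-|Hne]; [lra|].
  destruct (MVT_gen phi x y (fun u => Rmin (dphi u) kap)) as [m [_ Hm]].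
  - rewrite Rmin_left, Rmax_right by lra. intros u Hu.
    destruct (Hd u Hu) as [Hder Hle]. rewrite Rmin_left by lra. exact Hder.
  - rewrite Rmin_left, Rmax_right by lra. exact Hc.
  - rewrite Hm. apply Rmult_le_compat_r; [lra | apply Rmin_r].
Qed.

Lemma derive_neg_lt (phi dphi : R -> R) x y : x < y ->
  (forall u, x <= u <= y -> continuity_pt phi u) ->
  (forall u, x < u < y -> is_derive phi u (dphi u) /\ dphi u < 0) ->
  phi y < phi x.
Proof.
  intros Hxy Hc Hd.
  (* Apply [MVT_gen] strictly inside [(x, y)], where [dphi < 0] is known. *)
  set (x1 := (3 * x + y) / 4). set (y1 := (x + 3 * y) / 4).
  assert (Hleft : phi x1 - phi x <= 0 * (x1 - x)).
  { apply (derive_le_slope phi dphi); unfold x1 in *; try lra.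
    - intros u Hu; apply Hc; lra.
    - intros u Hu; destruct (Hd u ltac:(lra)); split; [easy | lra]. }
  assert (Hright : phi y - phi y1 <= 0 * (y - y1)).
  { apply (derive_le_slope phi dphi); unfold y1 in *; try lra.
    - intros u Hu; apply Hc; lra.
    - intros u Hu; destruct (Hd u ltac:(lra)); split; [easy | lra]. }
  destruct (MVT_gen phi x1 y1 dphi) as [m [Hm Hmvt]];
    unfold x1, y1 in *; rewrite Rmin_left, Rmax_right in * by lra.
  - intros u Hu; apply Hd; lra.
  - intros u Hu; apply Hc; lra.
  - destruct (Hd m ltac:(lra)) as [_ Hneg]. nra.
Qed.

Lemma level_barrier (phi dphi : R -> R) s t beta beta2 : s <= t ->
  (forall u, s <= u <= t -> continuity_pt phi u) ->
  (forall u, s < u < t -> is_derive phi u (dphi u)) ->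
  phi s <= beta -> beta < beta2 ->
  (forall u, s < u < t -> beta < phi u < beta2 -> dphi u <= 0) ->
  phi t <= beta.
Proof.
  intros Hst Hc Hd Hs Hbeta Hband. apply Rnot_lt_le; intros Ht.
  assert (Hst' : s < t) by (destruct (Req_dec s t) as [->|]; lra).
  pose proof (Rmin_l (phi t) beta2). pose proof (Rmin_r (phi t) beta2).
  pose proof (Rmin_glb_lt (phi t) beta2 beta Ht Hbeta).
  set (m := (beta + Rmin (phi t) beta2) / 2).
  destruct (first_crossing phi s t m) as [t' [Ht' [Hmt' Hbelow]]]; try (unfold m; lra).
  { intros u Hu; apply Hc; lra. }
  destruct (last_crossing phi s t' beta) as [z [Hz [Hbz Habove]]]; try (unfold m in *; lra).
  { intros u Hu; apply Hc; lra. }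
  assert (phi t' - phi z <= 0 * (t' - z)); [|unfold m in *; lra].
  apply (derive_le_slope phi dphi); try lra.
  - intros u Hu; apply Hc; lra.
  - intros u Hu. split; [apply Hd; lra|]. apply Hband; [lra|].
    specialize (Habove u ltac:(lra)). specialize (Hbelow u ltac:(lra)). unfold m in *; lra.
Qed.

Lemma derive_le_neg_unbounded (phi dphi : R -> R) s kap m : 0 < kap ->
  (forall u, s <= u -> is_derive phi u (dphi u) /\ dphi u <= - kap) ->
  ~ (forall u, s <= u -> m <= phi u).
Proof.
  intros Hkap Hd Hbound.
  set (t := s + (Rabs (phi s - m) + 1) / kap).
  assert (Hst : s < t) by (unfold t; pose proof (Rabs_pos (phi s - m));
    assert (0 < (Rabs (phi s - m) + 1) / kap) by (apply Rdiv_lt_0_compat; lra); lra).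
  assert (Hdrop : phi t - phi s <= - kap * (t - s)).
  { apply (derive_le_slope phi dphi); try lra.
    - intros u Hu. apply is_derive_continuity_pt with (dphi u), Hd; lra.
    - intros u Hu. apply Hd; lra. }
  assert (kap * (t - s) = Rabs (phi s - m) + 1) by (unfold t; field; lra).
  pose proof (Rle_abs (phi s - m)). specialize (Hbound t ltac:(lra)). lra.
Qed.

Lemma sublevel_trap (W dW w : R -> R) T g rho lo :
  (forall t, T < t -> is_derive W t (dW t) /\ continuity_pt w t) ->
  (forall t, T < t -> Rabs (w t - g) = rho -> lo < W t) ->
  (forall t, T < t -> Rabs (w t - g) < rho -> lo < W t -> dW t <= 0) ->
  forall s, T < s -> Rabs (w s - g) < rho -> W s <= lo ->
  forall t, s <= t -> Rabs (w t - g) < rho /\ W t <= lo.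
Proof.
  intros Hd Hedge Hdecr s Hs Hws HWs.
  assert (Hlevel : forall t, s <= t -> (forall u, s <= u < t -> Rabs (w u - g) < rho) -> W t <= lo).
  { intros t Ht Hin. apply (level_barrier W dW s t lo (lo + 1)); try lra.
    - intros u Hu. apply is_derive_continuity_pt with (dW u), Hd; lra.
    - intros u Hu. apply Hd; lra.
    - intros u Hu Hband. apply Hdecr; [lra | apply Hin; lra | lra]. }
  assert (Hin : forall t, s <= t -> Rabs (w t - g) < rho).
  { intros t Ht. apply Rnot_le_lt; intros Hout.
    assert (Hst : s < t) by (destruct (Req_dec s t) as [->|]; lra).
    destruct (first_crossing (fun u => Rabs (w u - g)) s t rho)
      as [r [Hr [Hedge_r Hbefore]]]; try lra.
    - intros u Hu. apply continuity_pt_comp with (f1 := fun u => w u - g) (f2 := Rabs).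
      + apply continuity_pt_minus with (f2 := fun _ => g); [apply Hd; lra|].
        apply continuity_pt_const; intros ? ?; reflexivity.
      + apply Rcontinuity_abs.
    - specialize (Hlevel r ltac:(lra) Hbefore). specialize (Hedge r ltac:(lra) Hedge_r). lra. }
  intros t Ht. split; [apply Hin; lra|]. apply Hlevel; [lra|]. intros u Hu; apply Hin; lra.
Qed.

Lemma crossing_cost (W dW w w1 : R -> R) s t c1 c2 kI M1 : s < t -> c1 < c2 -> 0 < kI ->
  (forall u, s <= u <= t -> is_derive W u (dW u) /\ is_derive w u (w1 u) /\ Rabs (w1 u) <= M1) ->
  (forall u, s < u < t -> c1 <= w u <= c2 -> dW u <= - kI) ->
  w s <= c1 -> c2 <= w t ->
  exists u1 u2, s <= u1 /\ u1 < u2 <= t /\ M1 * (W u2 - W u1) <= - (kI * (c2 - c1)).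
Proof.
  intros Hst Hc12 HkI Hd Hdecay Hws Hwt.
  assert (Hcw : forall u, s <= u <= t -> continuity_pt w u).
  { intros u Hu. apply is_derive_continuity_pt with (w1 u), Hd, Hu. }
  destruct (first_crossing w s t c2) as [u2 [Hu2 [Hwu2 Hbelow]]]; try lra.
  { intros u Hu; apply Hcw; lra. }
  destruct (last_crossing w s u2 c1) as [u1 [Hu1 [Hwu1 Habove]]]; try lra.
  { intros u Hu; apply Hcw; lra. }
  exists u1, u2. split; [lra | split; [lra|]].
  assert (Hduration : w u2 - w u1 <= M1 * (u2 - u1)).
  { apply (derive_le_slope w w1); try lra.
    - intros u Hu; apply Hcw; lra.
    - intros u Hu. destruct (Hd u ltac:(lra)) as [_ [Hder Hw1]].
      split; [exact Hder|]. apply Rabs_le_between in Hw1; lra. }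
  assert (Hdrop : W u2 - W u1 <= - kI * (u2 - u1)).
  { apply (derive_le_slope W dW); try lra.
    - intros u Hu. apply is_derive_continuity_pt with (dW u), Hd; lra.
    - intros u Hu. split; [apply Hd; lra|]. apply Hdecay; [lra|].
      specialize (Habove u ltac:(lra)). specialize (Hbelow u ltac:(lra)). lra. }
  assert (0 <= M1) by (destruct (Hd s ltac:(lra)) as [_ [_ H]]; pose proof (Rabs_pos (w1 s)); lra).
  assert (M1 * (W u2 - W u1) <= M1 * (- kI * (u2 - u1))) by (apply Rmult_le_compat_l; lra).
  assert (kI * (c2 - c1) <= kI * (M1 * (u2 - u1))) by (apply Rmult_le_compat_l; lra).
  nra.
Qed.

(* [W] decreases at rate [kd] off the small-[w] region and the good set, so [w] must keep
   returning to the small region; but each climb of [w] from [c1] to [c2] costs a fixed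
   amount of [W], after which the small region (where [|W| <= sig]) is out of reach. *)
Lemma eventually_good (W dW w w1 : R -> R) (Good : R -> Prop) T r0 c1 c2 sig kd kI M1 Wmin :
  0 < kd -> 0 < kI -> 0 < M1 -> r0 <= c1 -> c1 < c2 -> 2 * sig * M1 < kI * (c2 - c1) ->
  (forall t, T < t -> is_derive W t (dW t) /\ is_derive w t (w1 t)) ->
  (forall t, T < t -> Wmin <= W t /\ Rabs (w1 t) <= M1) ->
  (forall t, T < t -> (w t < r0 /\ Rabs (W t) <= sig) \/ Good t \/ dW t <= - kd) ->
  (forall t, T < t -> c1 <= w t <= c2 -> dW t <= - kI) ->
  (forall S, exists t, S < t /\ c2 <= w t) ->
  exists s, T < s /\ Good s.
Proof.
  intros Hkd HkI HM1 Hr0 Hc12 Hcost Hd Hbound Hcases Hclimb Hlimsup.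
  apply NNPP; intros Hno.
  assert (Hsmall : forall t, T < t -> (w t < r0 /\ Rabs (W t) <= sig) \/ dW t <= - kd).
  { intros t Ht. destruct (Hcases t Ht) as [|[Hgood|]]; auto. exfalso; eauto. }
  assert (HcW : forall u, T < u -> continuity_pt W u).
  { intros u Hu. apply is_derive_continuity_pt with (dW u), Hd, Hu. }
  assert (Hnever : forall s, T < s -> ~ forall u, s <= u -> dW u <= - kd).
  { intros s Hs Hall. apply (derive_le_neg_unbounded W dW s kd Wmin Hkd).
    - intros u Hu. split; [apply Hd; lra | apply Hall; lra].
    - intros u Hu. apply Hbound; lra. }
  destruct (classic (exists s0, T + 1 <= s0 /\ w s0 < r0 /\ Rabs (W s0) <= sig))
    as [[s0 [Hs0 [Hws0 HWs0]]]|Hnone];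
    [|apply (Hnever (T + 1)); [lra|]; intros u Hu;
      destruct (Hsmall u ltac:(lra)) as [Hu'|]; [exfalso; apply Hnone; exists u; tauto | easy]].
  assert (HWle : forall t, s0 <= t -> W t <= sig).
  { intros t Ht. apply (level_barrier W dW s0 t sig (sig + 1)); try lra.
    - intros u Hu; apply HcW; lra.
    - intros u Hu; apply Hd; lra.
    - apply Rabs_le_between in HWs0; lra.
    - intros u Hu Hband. destruct (Hsmall u ltac:(lra)) as [[_ Habs]|]; [|lra].
      apply Rabs_le_between in Habs; lra. }
  destruct (Hlimsup s0) as [s2 [Hs2 Hws2]].
  destruct (crossing_cost W dW w w1 s0 s2 c1 c2 kI M1) as [u1 [u2 [Hu1 [Hu12 Hcost12]]]]; try lra.
  { intros u Hu. destruct (Hd u ltac:(lra)). split; [|split]; try easy. apply Hbound; lra. }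
  { intros u Hu. apply Hclimb; lra. }
  assert (HWu2 : W u2 < - sig).
  { specialize (HWle u1 ltac:(lra)).
    assert (M1 * W u1 <= M1 * sig) by (apply Rmult_le_compat_l; lra). nra. }
  apply (Hnever u2); [lra|]. intros u Hu.
  assert (HWu : W u <= W u2).
  { apply (level_barrier W dW u2 u (W u2) (- sig)); try lra.
    - intros v Hv; apply HcW; lra.
    - intros v Hv; apply Hd; lra.
    - intros v Hv Hband. destruct (Hsmall v ltac:(lra)) as [[_ Habs]|]; [|lra].
      apply Rabs_le_between in Habs; lra. }
  destruct (Hsmall u ltac:(lra)) as [[_ Habs]|]; [|easy].
  apply Rabs_le_between in Habs; lra.
Qed.

Lemma damped_bound (y dy : R -> R) S a B : 0 < a ->
  (forall t, S <= t -> is_derive y t (dy t) /\ Rabs (dy t + a * y t) <= B) ->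
  forall t, S <= t -> Rabs (y t) <= Rmax (Rabs (y S)) (B / a).
Proof.
  intros Ha Hd t Ht.
  pose proof (Rmax_l (Rabs (y S)) (B / a)). pose proof (Rmax_r (Rabs (y S)) (B / a)).
  set (m := Rmax (Rabs (y S)) (B / a)) in *.
  assert (HaB : a * (B / a) = B) by (field; lra).
  assert (Hc : forall u, S <= u -> continuity_pt y u).
  { intros u Hu. apply is_derive_continuity_pt with (dy u), Hd, Hu. }
  apply Rabs_le; split.
  - enough (- y t <= m) by lra.
    apply (level_barrier (fun u => - y u) (fun u => - dy u) S t m (m + 1)); try lra.
    + intros u Hu. apply continuity_pt_opp with (f := y), Hc; lra.
    + intros u Hu. apply (is_derive_opp y), Hd; lra.
    + pose proof (Rabs_Ropp (y S)). pose proof (Rle_abs (- y S)). lra.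
    + intros u Hu Hband. destruct (Hd u ltac:(lra)) as [_ Hb].
      apply Rabs_le_between in Hb.
      assert (a * (B / a) <= a * - y u) by (apply Rmult_le_compat_l; lra). lra.
  - apply (level_barrier y dy S t m (m + 1)); try lra.
    + intros u Hu. apply Hc; lra.
    + intros u Hu. apply Hd; lra.
    + pose proof (Rle_abs (y S)). lra.
    + intros u Hu Hband. destruct (Hd u ltac:(lra)) as [_ Hb].
      apply Rabs_le_between in Hb.
      assert (a * (B / a) <= a * y u) by (apply Rmult_le_compat_l; lra). lra.
Qed.

(* Three completions of squares, with [u1 <= B] bounding the [y^2] term. *)
Lemma damped_energy_ineq a eta B y u e u1 : 0 < a -> 0 < eta <= 1 -> eta <= a -> 0 <= B ->
  eta * (B + a * a / 2) <= a / 4 -> u1 <= B ->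
  y * (- a * y - u - e) + u * y + eta * ((- a * y - u - e) * u + y * u1 * y)
  <= - (eta / 4) * (y * y + u * u) + (1 / a + 1) * (e * e).
Proof.
  intros Ha Heta Hea HB HeB Hu1.
  assert (h1 : - (eta * a * u * y) <= eta * (u * u / 2 + a * a * (y * y) / 2)).
  { assert (0 <= eta * ((u + a * y) * (u + a * y)))
      by (apply Rmult_le_pos; [lra | apply Rle_0_sqr]).
    lra. }
  assert (h2 : - (e * y) <= (a / 4) * (y * y) + e * e / a).
  { assert (0 <= / a * ((a * y / 2 + e) * (a * y / 2 + e))).
    { apply Rmult_le_pos; [left; apply Rinv_0_lt_compat, Ha | apply Rle_0_sqr]. }
    assert (/ a * ((a * y / 2 + e) * (a * y / 2 + e)) = (a / 4) * (y * y) + e * e / a + e * y)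
      by (field; lra).
    lra. }
  assert (h3 : - (eta * e * u) <= eta * (u * u / 4 + e * e)).
  { assert (0 <= eta * ((u / 2 + e) * (u / 2 + e)))
      by (apply Rmult_le_pos; [lra | apply Rle_0_sqr]).
    lra. }
  assert (Hyy : 0 <= y * y) by apply Rle_0_sqr.
  assert (h4 : eta * u1 * (y * y) <= eta * B * (y * y)).
  { apply Rmult_le_compat_r; [exact Hyy|]. apply Rmult_le_compat_l; lra. }
  assert (h5 : eta * (B + a * a / 2) * (y * y) <= a / 4 * (y * y))
    by (apply Rmult_le_compat_r; lra).
  assert (h6 : eta * (e * e) <= e * e) by (pose proof (Rle_0_sqr e); unfold Rsqr in *; nra).
  assert (h7 : eta / 4 * (y * y) <= a / 2 * (y * y)) by (apply Rmult_le_compat_r; lra).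
  assert (e * e / a = 1 / a * (e * e)) by (field; lra).
  nra.
Qed.

Lemma Rpower_pos x y : 0 < Rpower x y.
Proof. apply exp_pos. Qed.

Lemma Rpower_pred x y : 0 < x -> Rpower x y = x * Rpower x (y - 1).
Proof.
  intros Hx. replace y with (1 + (y - 1)) at 1 by ring.
  rewrite Rpower_plus, Rpower_1 by exact Hx. reflexivity.
Qed.

Lemma is_derive_Rpower x y : 0 < x -> is_derive (fun u => Rpower u y) x (y * Rpower x (y - 1)).
Proof. intros Hx. apply is_derive_Reals, derivable_pt_lim_power, Hx. Qed.

Lemma Derive_Rpower x y : 0 < x -> Derive (fun u => Rpower u y) x = y * Rpower x (y - 1).
Proof. intros Hx. apply is_derive_unique, is_derive_Rpower, Hx. Qed.

Section Potential.

Variables b k p g : R.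
Hypotheses (Hb : 0 < b) (Hk : 0 < k) (Hp : 1 < p) (Hg0 : 0 < g) (Hg : Rpower g (p - 1) = b / k).

Definition force x := - b * x + k * Rpower x p.
Definition force_deriv x := - b + k * p * Rpower x (p - 1).
Definition potential x := - b * (x * x) / 2 + k / (p + 1) * Rpower x (p + 1).
Definition force_sup M := b * M + k * Rpower M p.

Lemma is_derive_force x : 0 < x -> is_derive force x (force_deriv x).
Proof.
  intros Hx. unfold force, force_deriv.
  auto_derive; [eexists; apply is_derive_Rpower, Hx|].
  rewrite Derive_Rpower by exact Hx. ring.
Qed.

Lemma is_derive_potential x : 0 < x -> is_derive potential x (force x).
Proof.
  intros Hx. unfold potential, force.
  auto_derive; [eexists; apply is_derive_Rpower, Hx|].
  rewrite Derive_Rpower by exact Hx. replace (p + 1 - 1) with p by ring. field. lra.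
Qed.

Lemma force_factor x : 0 < x -> force x = x * (k * Rpower x (p - 1) - b).
Proof. intros Hx. unfold force. rewrite (Rpower_pred x p Hx). ring. Qed.

Lemma power_lt_equilibrium x : 0 < x < g -> k * Rpower x (p - 1) < b.
Proof.
  intros Hx. assert (Rpower x (p - 1) < b / k) by (rewrite <- Hg; apply Rlt_Rpower_l; lra).
  apply Rmult_lt_compat_l with (r := k) in H; [|exact Hk].
  replace (k * (b / k)) with b in H by (field; lra). exact H.
Qed.

Lemma power_gt_equilibrium x : g < x -> b < k * Rpower x (p - 1).
Proof.
  intros Hx. assert (b / k < Rpower x (p - 1)) by (rewrite <- Hg; apply Rlt_Rpower_l; lra).
  apply Rmult_lt_compat_l with (r := k) in H; [|exact Hk].
  replace (k * (b / k)) with b in H by (field; lra). exact H.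
Qed.

Lemma force_neg x : 0 < x < g -> force x < 0.
Proof.
  intros Hx. rewrite force_factor by lra.
  pose proof (power_lt_equilibrium x Hx). nra.
Qed.

Lemma force_pos x : g < x -> 0 < force x.
Proof.
  intros Hx. rewrite force_factor by lra.
  pose proof (power_gt_equilibrium x Hx). nra.
Qed.

Lemma force_le_neg_below c1 c2 : 0 < c1 <= c2 -> c2 < g ->
  exists u, 0 < u /\ forall x, c1 <= x <= c2 -> force x <= - u.
Proof.
  intros Hc1 Hc2. pose proof (power_lt_equilibrium c2 ltac:(lra)).
  exists (c1 * (b - k * Rpower c2 (p - 1))). split; [nra|].
  intros x Hx. rewrite force_factor by lra.
  assert (Rpower x (p - 1) <= Rpower c2 (p - 1)) by (apply Rle_Rpower_l; lra).
  assert (k * Rpower x (p - 1) <= k * Rpower c2 (p - 1)) by (apply Rmult_le_compat_l; lra).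
  assert (c1 * (b - k * Rpower c2 (p - 1)) <= x * (b - k * Rpower c2 (p - 1))) by nra.
  nra.
Qed.

Lemma force_ge_pos_above c : g < c ->
  exists u, 0 < u /\ forall x, c <= x -> u <= force x.
Proof.
  intros Hc. pose proof (power_gt_equilibrium c Hc).
  exists (c * (k * Rpower c (p - 1) - b)). split; [nra|].
  intros x Hx. rewrite force_factor by lra.
  assert (Rpower c (p - 1) <= Rpower x (p - 1)) by (apply Rle_Rpower_l; lra).
  assert (k * Rpower c (p - 1) <= k * Rpower x (p - 1)) by (apply Rmult_le_compat_l; lra).
  assert (c * (k * Rpower c (p - 1) - b) <= x * (k * Rpower c (p - 1) - b)) by nra.
  nra.
Qed.

Lemma force_small_cases r0 r1 : 0 < r0 -> 0 < r1 < g ->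
  exists d, 0 < d /\ forall x, 0 < x -> force x * force x < d -> x < r0 \/ Rabs (x - g) < r1.
Proof.
  intros Hr0 Hr1. pose proof (Rmin_l r0 (g - r1)). pose proof (Rmin_r r0 (g - r1)).
  pose proof (Rmin_pos r0 (g - r1) Hr0 ltac:(lra)).
  set (r := Rmin r0 (g - r1)) in *.
  destruct (force_le_neg_below r (g - r1)) as [u1 [Hu1 Hleft]]; try lra.
  destruct (force_ge_pos_above (g + r1)) as [u2 [Hu2 Hright]]; try lra.
  pose proof (Rmin_l u1 u2). pose proof (Rmin_r u1 u2). pose proof (Rmin_pos u1 u2 Hu1 Hu2).
  exists (Rmin u1 u2 * Rmin u1 u2). split; [nra|].
  intros x Hx Hsmall.
  destruct (Rlt_dec x r) as [|Hxr]; [left; lra|].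
  destruct (Rle_dec x (g - r1)) as [Hxl|Hxl].
  { specialize (Hleft x ltac:(lra)). exfalso. nra. }
  destruct (Rle_dec (g + r1) x) as [Hxg|Hxg].
  { specialize (Hright x Hxg). exfalso. nra. }
  right. apply Rabs_lt_between. lra.
Qed.

Lemma force_bound x M : 0 < x <= M -> Rabs (force x) <= force_sup M.
Proof.
  intros Hx. unfold force, force_sup.
  assert (Rpower x p <= Rpower M p) by (apply Rle_Rpower_l; lra).
  pose proof (Rpower_pos x p). apply Rabs_le. nra.
Qed.

Lemma force_deriv_le x M : 0 < x <= M -> force_deriv x <= k * p * Rpower M (p - 1).
Proof.
  intros Hx. unfold force_deriv.
  assert (Rpower x (p - 1) <= Rpower M (p - 1)) by (apply Rle_Rpower_l; lra).
  assert (0 < k * p) by nra. nra.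
Qed.

Lemma potential_small x r : 0 < x <= r -> r <= 1 -> Rabs (potential x) <= (b + k) * r.
Proof.
  intros Hx Hr. unfold potential.
  rewrite Rpower_pred by lra. replace (p + 1 - 1) with p by ring.
  assert (Hxp : Rpower x p <= Rpower 1 p) by (apply Rle_Rpower_l; lra).
  replace (Rpower 1 p) with 1 in Hxp
    by (unfold Rpower; rewrite ln_1, Rmult_0_r, exp_0; reflexivity).
  pose proof (Rpower_pos x p).
  assert (Hkp : 0 < k / (p + 1) <= k).
  { split; [apply Rdiv_lt_0_compat; lra|]. apply Rmult_le_reg_r with (p + 1); [lra|].
    unfold Rdiv. rewrite Rmult_assoc, Rinv_l by lra. nra. }
  assert (0 < x * x <= r) by nra. assert (0 < x * Rpower x p <= r) by nra.
  assert (0 < k / (p + 1) * (x * Rpower x p) <= k * r) by nra.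
  apply Rabs_le. split; nra.
Qed.

Lemma potential_strict_min x : 0 < x -> x <> g -> potential g < potential x.
Proof.
  intros Hx Hxg.
  assert (Hc : forall u, 0 < u -> continuity_pt potential u).
  { intros u Hu. apply is_derive_continuity_pt with (force u), is_derive_potential, Hu. }
  destruct (Rtotal_order x g) as [Hlt|[Heq|Hgt]]; [| contradiction |].
  - apply (derive_neg_lt potential force); [exact Hlt | intros u Hu; apply Hc; lra |].
    intros u Hu. split; [apply is_derive_potential; lra | apply force_neg; lra].
  - enough (- potential x < - potential g) by lra.
    apply (derive_neg_lt (fun u => - potential u) (fun u => - force u)); [exact Hgt | |].
    + intros u Hu. apply continuity_pt_opp with (f := potential), Hc; lra.
    + intros u Hu. split; [apply (is_derive_opp potential), is_derive_potential; lra|].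
      pose proof (force_pos u ltac:(lra)). lra.
Qed.

Lemma potential_min x : 0 < x -> potential g <= potential x.
Proof.
  intros Hx. destruct (Req_dec x g) as [->|Hne]; [lra|].
  left. apply potential_strict_min; assumption.
Qed.

Lemma potential_gap rho m : 0 < rho < g -> 0 < m ->
  exists Dl, 0 < Dl <= m /\ forall x, Rabs (x - g) = rho -> potential g + Dl <= potential x.
Proof.
  intros Hrho Hm.
  pose proof (potential_strict_min (g - rho) ltac:(lra) ltac:(lra)).
  pose proof (potential_strict_min (g + rho) ltac:(lra) ltac:(lra)).
  pose proof (Rmin_l (potential (g - rho)) (potential (g + rho))).
  pose proof (Rmin_r (potential (g - rho)) (potential (g + rho))).
  set (gap := Rmin (potential (g - rho)) (potential (g + rho)) - potential g).
  assert (Hgap : 0 < gap) by (unfold gap; apply Rmin_case; lra).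
  exists (Rmin gap m). pose proof (Rmin_l gap m). pose proof (Rmin_r gap m).
  split; [split; [apply Rmin_pos|]; lra|].
  intros x Hx. unfold gap in *. destruct (Rle_dec x g).
  - rewrite Rabs_left1 in Hx by lra. replace x with (g - rho) by lra. lra.
  - rewrite Rabs_right in Hx by lra. replace x with (g + rho) by lra. lra.
Qed.


Section DampedOscillator.

Variables (a M T0 : R) (w w1 e : R -> R).
Hypothesis Ha : 0 < a.
Hypothesis Hode : forall t, T0 < t ->
  is_derive w t (w1 t) /\ is_derive w1 t (- a * w1 t - force (w t) - e t).
Hypothesis Hw : forall t, T0 < t -> 0 < w t <= M.
Hypothesis He : vanishes e.

Lemma derivative_eventually_bounded :
  exists M1 S, 0 < M1 /\ T0 < S /\ forall t, S <= t -> Rabs (w1 t) <= M1.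
Proof.
  destruct (He 1 ltac:(lra)) as [Te HTe].
  set (S := Rmax T0 Te + 1). pose proof (Rmax_l T0 Te). pose proof (Rmax_r T0 Te).
  set (B := force_sup M + 1).
  exists (Rmax (Rmax (Rabs (w1 S)) (B / a)) 1), S.
  split; [pose proof (Rmax_r (Rmax (Rabs (w1 S)) (B / a)) 1); lra|].
  split; [unfold S; lra|]. intros t Ht.
  eapply Rle_trans; [|apply Rmax_l].
  apply (damped_bound w1 (fun t => - a * w1 t - force (w t) - e t)); [exact Ha| |exact Ht].
  intros u Hu. split; [apply Hode; unfold S in *; lra|].
  replace (- a * w1 u - force (w u) - e u + a * w1 u) with (- (force (w u) + e u)) by ring.
  rewrite Rabs_Ropp. eapply Rle_trans; [apply Rabs_triang|].
  pose proof (force_bound (w u) M (Hw u ltac:(unfold S in *; lra))).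
  pose proof (HTe u ltac:(unfold S in *; lra)). unfold B. lra.
Qed.

Definition lyap eta t := w1 t * w1 t / 2 + potential (w t) + eta * w1 t * force (w t).
Definition lyap_deriv eta t :=
  let w2 := - a * w1 t - force (w t) - e t in
  w1 t * w2 + force (w t) * w1 t + eta * (w2 * force (w t) + w1 t * force_deriv (w t) * w1 t).
Definition defect t := w1 t * w1 t + force (w t) * force (w t).

Lemma is_derive_lyap eta t : T0 < t -> is_derive (lyap eta) t (lyap_deriv eta t).
Proof.
  intros Ht. destruct (Hode t Ht) as [Hw' Hw1']. pose proof (proj1 (Hw t Ht)) as Hpos.
  unfold lyap, lyap_deriv.
  auto_derive.
  - repeat split; eexists; eauto using is_derive_potential, is_derive_force.
  - replace (Derive (fun x => w x) t) with (w1 t) by (symmetry; apply is_derive_unique, Hw').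
    replace (Derive (fun x => w1 x) t) with (- a * w1 t - force (w t) - e t)
      by (symmetry; apply is_derive_unique, Hw1').
    replace (Derive (fun x => potential x) (w t)) with (force (w t))
      by (symmetry; apply is_derive_unique, is_derive_potential, Hpos).
    replace (Derive (fun x => force x) (w t)) with (force_deriv (w t))
      by (symmetry; apply is_derive_unique, is_derive_force, Hpos).
    field.
Qed.

(* The weights of the cross term for which [damped_energy_ineq] applies. *)
Definition admissible eta :=
  0 < eta <= 1 / 2 /\ eta <= a /\ eta * (k * p * Rpower M (p - 1) + a * a / 2) <= a / 4.

Lemma admissible_exists Dl : 0 < Dl ->
  exists eta, admissible eta /\ eta * (force_sup M * force_sup M) <= Dl / 2.
Proof.
  intros HDl. set (B := k * p * Rpower M (p - 1) + a * a / 2).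
  set (U := force_sup M * force_sup M). assert (HU : 0 <= U) by apply Rle_0_sqr.
  assert (HB : 0 < B).
  { unfold B. pose proof (Rpower_pos M (p - 1)). assert (0 < k * p) by nra.
    assert (0 < k * p * Rpower M (p - 1)) by nra. nra. }
  assert (0 < a / 4 / B) by (apply Rdiv_lt_0_compat; lra).
  assert (0 < Dl / 2 / (U + 1)) by (apply Rdiv_lt_0_compat; lra).
  pose proof (Rmin_l (1 / 2) a). pose proof (Rmin_r (1 / 2) a).
  pose proof (Rmin_l (a / 4 / B) (Dl / 2 / (U + 1))).
  pose proof (Rmin_r (a / 4 / B) (Dl / 2 / (U + 1))).
  pose proof (Rmin_l (Rmin (1 / 2) a) (Rmin (a / 4 / B) (Dl / 2 / (U + 1)))).
  pose proof (Rmin_r (Rmin (1 / 2) a) (Rmin (a / 4 / B) (Dl / 2 / (U + 1)))).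
  pose proof (Rmin_pos (Rmin (1 / 2) a) (Rmin (a / 4 / B) (Dl / 2 / (U + 1)))
    (Rmin_pos (1 / 2) a ltac:(lra) Ha)
    (Rmin_pos (a / 4 / B) (Dl / 2 / (U + 1)) ltac:(assumption) ltac:(assumption))).
  set (eta := Rmin (Rmin (1 / 2) a) (Rmin (a / 4 / B) (Dl / 2 / (U + 1)))) in *.
  exists eta. unfold admissible; fold B U. repeat split; try lra.
  - apply Rle_div_r; lra.
  - assert (eta * (U + 1) <= Dl / 2) by (apply Rle_div_r; lra). nra.
Qed.

Lemma lyap_deriv_le eta t : admissible eta -> T0 < t ->
  lyap_deriv eta t <= - (eta / 4) * defect t + (1 / a + 1) * (e t * e t).
Proof.
  intros [Heta [Hea HeB]] Ht. unfold lyap_deriv, defect.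
  apply (damped_energy_ineq a eta (k * p * Rpower M (p - 1))); try lra.
  - pose proof (Rpower_pos M (p - 1)). assert (0 < k * p) by nra. nra.
  - apply force_deriv_le, Hw, Ht.
Qed.

Lemma lyap_deriv_eventually_le eta kap : admissible eta -> 0 < kap ->
  exists T, T0 < T /\ forall t, T < t -> lyap_deriv eta t <= - (eta / 4) * defect t + kap.
Proof.
  intros Heta Hkap. set (C := 1 / a + 1).
  assert (HC : 0 < C) by (unfold C; assert (0 < 1 / a) by (apply Rdiv_lt_0_compat; lra); lra).
  pose proof (Rmin_l 1 (kap / C)). pose proof (Rmin_r 1 (kap / C)).
  pose proof (Rmin_pos 1 (kap / C) ltac:(lra) ltac:(apply Rdiv_lt_0_compat; lra)).
  destruct (He (Rmin 1 (kap / C)) ltac:(lra)) as [Te HTe].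
  exists (Rmax T0 Te + 1). pose proof (Rmax_l T0 Te). pose proof (Rmax_r T0 Te).
  split; [lra|]. intros t Ht.
  specialize (HTe t ltac:(lra)). pose proof (Rabs_pos (e t)).
  set (eps := Rmin 1 (kap / C)) in *.
  assert (Hee : e t * e t <= eps).
  { pose proof (Rsqr_abs (e t)). unfold Rsqr in *. nra. }
  assert (C * (e t * e t) <= kap).
  { apply Rle_trans with (C * (kap / C)); [apply Rmult_le_compat_l; lra|].
    right; field; lra. }
  pose proof (lyap_deriv_le eta t Heta ltac:(lra)). unfold C in *. lra.
Qed.

Lemma lyap_near_potential eta t : 0 <= eta <= 1 ->
  Rabs (lyap eta t - potential (w t)) <= defect t.
Proof.
  intros Heta. unfold lyap, defect.
  set (y := w1 t). set (u := force (w t)).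
  assert (Hyu : Rabs (y * u) <= (y * y + u * u) / 2).
  { rewrite Rabs_mult. pose proof (Rabs_pos y). pose proof (Rabs_pos u).
    pose proof (Rsqr_abs y). pose proof (Rsqr_abs u).
    pose proof (Rle_0_sqr (Rabs y - Rabs u)). unfold Rsqr in *. nra. }
  assert (Hcross : Rabs (eta * y * u) <= (y * y + u * u) / 2).
  { rewrite Rmult_assoc, Rabs_mult, (Rabs_right eta) by lra.
    apply Rle_trans with (1 * Rabs (y * u)); [|lra].
    apply Rmult_le_compat_r; [apply Rabs_pos | lra]. }
  apply Rabs_le_between in Hcross.
  pose proof (Rle_0_sqr y). pose proof (Rle_0_sqr u). unfold Rsqr in *.
  apply Rabs_le. split; lra.
Qed.

Lemma lyap_ge eta t : 0 <= eta <= 1 / 2 ->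
  potential (w t) + w1 t * w1 t / 4 - eta * (force (w t) * force (w t)) / 2 <= lyap eta t.
Proof.
  intros Heta. unfold lyap.
  set (y := w1 t). set (u := force (w t)).
  assert (0 <= eta * ((y + u) * (y + u))) by (apply Rmult_le_pos; [lra | apply Rle_0_sqr]).
  assert (eta * (y * y) <= y * y / 2) by (pose proof (Rle_0_sqr y); unfold Rsqr in *; nra).
  nra.
Qed.

Lemma lyap_lower eta Dl t : admissible eta ->
  eta * (force_sup M * force_sup M) <= Dl / 2 -> T0 < t ->
  potential (w t) + w1 t * w1 t / 4 - Dl / 4 <= lyap eta t.
Proof.
  intros Heta HetaU Ht. destruct Heta as [Heta _].
  pose proof (lyap_ge eta t ltac:(lra)).
  pose proof (force_bound (w t) M (Hw t Ht)) as Hf.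
  assert (force (w t) * force (w t) <= force_sup M * force_sup M).
  { pose proof (Rabs_pos (force (w t))). pose proof (Rsqr_abs (force (w t))).
    unfold Rsqr in *. nra. }
  assert (eta * (force (w t) * force (w t)) <= Dl / 2)
    by (eapply Rle_trans; [apply Rmult_le_compat_l; [lra | eassumption] | exact HetaU]).
  lra.
Qed.

Lemma small_defect_cases eta Dl r0 rho : admissible eta -> 0 < Dl -> 0 < r0 -> 0 < rho ->
  exists delta, 0 < delta /\ forall t, T0 < t -> defect t < delta ->
    w t < r0 \/ (Rabs (w t - g) < rho /\ lyap eta t < potential g + Dl / 4).
Proof.
  intros [Heta _] HDl Hr0 Hrho.
  destruct (continuity_pt_ball potential g (Dl / 8)) as [r1 [Hr1 Hnear]];
    [apply is_derive_continuity_pt with (force g), is_derive_potential, Hg0 | lra |].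
  pose proof (Rmin_l r1 (Rmin rho (g / 2))). pose proof (Rmin_r r1 (Rmin rho (g / 2))).
  pose proof (Rmin_l rho (g / 2)). pose proof (Rmin_r rho (g / 2)).
  pose proof (Rmin_pos r1 (Rmin rho (g / 2)) Hr1 (Rmin_pos rho (g / 2) Hrho ltac:(lra))).
  set (r := Rmin r1 (Rmin rho (g / 2))) in *.
  destruct (force_small_cases r0 r Hr0 ltac:(lra)) as [d [Hd Hcases]].
  exists (Rmin d (Dl / 8)). split; [apply Rmin_pos; lra|].
  pose proof (Rmin_l d (Dl / 8)). pose proof (Rmin_r d (Dl / 8)).
  intros t Ht Hdef.
  assert (Hforce : force (w t) * force (w t) < d)
    by (unfold defect in Hdef; pose proof (Rle_0_sqr (w1 t)); unfold Rsqr in *; lra).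
  destruct (Hcases (w t) (proj1 (Hw t Ht)) Hforce) as [|Hwg]; [now left | right].
  split; [lra|].
  specialize (Hnear (w t) ltac:(lra)). apply Rabs_lt_between in Hnear.
  pose proof (lyap_near_potential eta t ltac:(lra)) as Hlp. apply Rabs_le_between in Hlp. lra.
Qed.

Lemma lyap_trap eta rho Dl : admissible eta -> 0 < rho <= g / 4 -> 0 < Dl ->
  (forall x, Rabs (x - g) = rho -> potential g + Dl <= potential x) ->
  eta * (force_sup M * force_sup M) <= Dl / 2 ->
  exists T, T0 < T /\ forall s, T < s ->
    Rabs (w s - g) < rho -> lyap eta s <= potential g + Dl / 4 ->
    forall t, s <= t -> Rabs (w t - g) < rho /\ lyap eta t <= potential g + Dl / 4.
Proof.
  intros Heta Hrho HDl Hedge HetaU.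
  destruct (small_defect_cases eta Dl (g / 2) rho Heta HDl ltac:(lra) ltac:(lra))
    as [delta [Hdelta Hcases]].
  pose proof Heta as [[Heta0 _] _].
  destruct (lyap_deriv_eventually_le eta (eta / 4 * delta) Heta ltac:(nra)) as [T [HT Hdecay]].
  exists T. split; [exact HT|].
  apply (sublevel_trap (lyap eta) (lyap_deriv eta) w T g rho).
  - intros t Ht. split; [apply is_derive_lyap; lra|].
    apply is_derive_continuity_pt with (w1 t), Hode; lra.
  - intros t Ht Hwt. pose proof (lyap_lower eta Dl t Heta HetaU ltac:(lra)).
    pose proof (Hedge (w t) Hwt). pose proof (Rle_0_sqr (w1 t)). unfold Rsqr in *. lra.
  - intros t Ht Hwt Habove. specialize (Hdecay t Ht).
    destruct (Rlt_dec (defect t) delta) as [Hsmall|Hlarge].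
    + destruct (Hcases t ltac:(lra) Hsmall) as [Hw0|[_ Hbelow]]; [|lra].
      apply Rabs_lt_between in Hwt. lra.
    + assert (eta / 4 * delta <= eta / 4 * defect t) by (apply Rmult_le_compat_l; lra). lra.
Qed.

Lemma climb_dissipation eta c1 c2 : admissible eta -> 0 < c1 <= c2 -> c2 < g ->
  exists kI T, 0 < kI /\ T0 < T /\ forall t, T < t -> c1 <= w t <= c2 -> lyap_deriv eta t <= - kI.
Proof.
  intros Heta Hc1 Hc2. pose proof Heta as [[Heta0 _] _].
  destruct (force_le_neg_below c1 c2 Hc1 Hc2) as [u [Hu Hclimb]].
  assert (HkI : 0 < eta / 4 * (u * u) / 2) by (assert (0 < u * u) by nra; nra).
  destruct (lyap_deriv_eventually_le eta (eta / 4 * (u * u) / 2) Heta HkI) as [T [HT Hdecay]].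
  exists (eta / 4 * (u * u) / 2), T. split; [exact HkI|]. split; [exact HT|].
  intros t Ht Hwt. specialize (Hdecay t Ht). specialize (Hclimb (w t) Hwt).
  assert (u * u <= defect t)
    by (unfold defect; pose proof (Rle_0_sqr (w1 t)); unfold Rsqr in *; nra).
  assert (eta / 4 * (u * u) <= eta / 4 * defect t) by (apply Rmult_le_compat_l; lra).
  lra.
Qed.

Lemma lyap_trichotomy eta Dl rho r0 D : admissible eta -> 0 < Dl -> 0 < rho ->
  0 < r0 <= 1 -> (b + k) * r0 <= D ->
  exists kd T, 0 < kd /\ T0 < T /\ forall t, T < t ->
    (w t < r0 /\ Rabs (lyap eta t) <= 2 * D)
    \/ (Rabs (w t - g) < rho /\ lyap eta t <= potential g + Dl / 4)
    \/ lyap_deriv eta t <= - kd.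
Proof.
  intros Heta HDl Hrho Hr0 HD. pose proof Heta as [[Heta0 Heta1] _].
  assert (0 < D) by nra.
  destruct (small_defect_cases eta Dl r0 rho Heta HDl ltac:(lra) Hrho) as [delta [Hdelta Hcases]].
  pose proof (Rmin_l delta D). pose proof (Rmin_r delta D).
  pose proof (Rmin_pos delta D Hdelta ltac:(lra)) as Hd.
  set (d := Rmin delta D) in *.
  assert (Hkd : 0 < eta / 4 * d / 2) by nra.
  destruct (lyap_deriv_eventually_le eta (eta / 4 * d / 2) Heta Hkd) as [T [HT Hdecay]].
  exists (eta / 4 * d / 2), T. split; [exact Hkd|]. split; [exact HT|].
  intros t Ht. specialize (Hdecay t Ht).
  destruct (Rlt_dec (defect t) d) as [Hsmall|Hlarge].
  - destruct (Hcases t ltac:(lra) ltac:(lra)) as [Hw0|[Hwg HW]]; [left | right; left; lra].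
    split; [exact Hw0|].
    pose proof (lyap_near_potential eta t ltac:(lra)).
    pose proof (potential_small (w t) r0 ltac:(pose proof (Hw t ltac:(lra)); lra) ltac:(lra)).
    pose proof (Rabs_triang (lyap eta t - potential (w t)) (potential (w t))) as Htri.
    replace (lyap eta t - potential (w t) + potential (w t)) with (lyap eta t) in Htri by ring.
    lra.
  - right; right. assert (eta / 4 * d <= eta / 4 * defect t) by (apply Rmult_le_compat_l; lra).
    lra.
Qed.

Lemma lyap_entry eta rho Dl : admissible eta -> 0 < rho -> 0 < Dl ->
  eta * (force_sup M * force_sup M) <= Dl / 2 ->
  (exists c, c > 0 /\ forall T, exists t, t > T /\ w t >= c) ->
  forall T, exists s, T < s /\ Rabs (w s - g) < rho /\ lyap eta s <= potential g + Dl / 4.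
Proof.
  intros Heta Hrho HDl HetaU [c [Hc Hrec]] T.
  destruct derivative_eventually_bounded as [M1 [S [HM1 [HS Hw1]]]].
  pose proof (Rmin_l c g). pose proof (Rmin_r c g). pose proof (Rmin_pos c g Hc Hg0).
  set (c' := Rmin c g) in *.
  destruct (climb_dissipation eta (c' / 4) (c' / 2) Heta ltac:(lra) ltac:(lra))
    as [kI [Tc [HkI [HTc Hclimb]]]].
  set (D0 := kI * (c' / 4) / M1).
  assert (HD0 : 0 < D0) by (unfold D0; apply Rdiv_lt_0_compat; nra).
  assert (0 < D0 / 8 / (b + k)) by (apply Rdiv_lt_0_compat; lra).
  pose proof (Rmin_l (Rmin (c' / 4) 1) (D0 / 8 / (b + k))).
  pose proof (Rmin_r (Rmin (c' / 4) 1) (D0 / 8 / (b + k))).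
  pose proof (Rmin_l (c' / 4) 1). pose proof (Rmin_r (c' / 4) 1).
  pose proof (Rmin_pos (Rmin (c' / 4) 1) (D0 / 8 / (b + k))
    (Rmin_pos (c' / 4) 1 ltac:(lra) ltac:(lra)) ltac:(assumption)) as Hr0.
  set (r0 := Rmin (Rmin (c' / 4) 1) (D0 / 8 / (b + k))) in *.
  destruct (lyap_trichotomy eta Dl rho r0 (D0 / 8) Heta HDl Hrho ltac:(lra)
    ltac:(rewrite Rmult_comm; apply Rle_div_r; lra)) as [kd [Td [Hkd [HTd Hcases]]]].
  pose proof (Rmax_l (Rmax Tc Td) (Rmax S T)). pose proof (Rmax_r (Rmax Tc Td) (Rmax S T)).
  pose proof (Rmax_l Tc Td). pose proof (Rmax_r Tc Td).
  pose proof (Rmax_l S T). pose proof (Rmax_r S T).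
  set (T' := Rmax (Rmax Tc Td) (Rmax S T)) in *.
  destruct (eventually_good (lyap eta) (lyap_deriv eta) w w1
    (fun s => Rabs (w s - g) < rho /\ lyap eta s <= potential g + Dl / 4)
    T' r0 (c' / 4) (c' / 2) (2 * (D0 / 8)) kd kI M1 (potential g - Dl / 4)) as [s [Hs Hgood]];
    try lra.
  - assert (D0 * M1 = kI * (c' / 4)) by (unfold D0; field; lra). nra.
  - intros t Ht. split; [apply is_derive_lyap | apply Hode]; lra.
  - intros t Ht. split; [|apply Hw1; lra].
    pose proof (lyap_lower eta Dl t Heta HetaU ltac:(lra)).
    pose proof (potential_min (w t) (proj1 (Hw t ltac:(lra)))).
    pose proof (Rle_0_sqr (w1 t)). unfold Rsqr in *. lra.
  - intros t Ht. apply Hcases. lra.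
  - intros t Ht. apply Hclimb. lra.
  - intros S'. destruct (Hrec S') as [t [Ht Hwt]]. exists t. split; lra.
  - exists s. split; [lra | exact Hgood].
Qed.

Lemma converges_to_equilibrium :
  (exists c, c > 0 /\ forall T, exists t, t > T /\ w t >= c) ->
  forall eps, 0 < eps -> exists T, forall t, T < t -> Rabs (w t - g) < eps /\ Rabs (w1 t) < eps.
Proof.
  intros Hrec eps Heps.
  pose proof (Rmin_l (g / 4) (eps / 2)). pose proof (Rmin_r (g / 4) (eps / 2)).
  pose proof (Rmin_pos (g / 4) (eps / 2) ltac:(lra) ltac:(lra)).
  set (rho := Rmin (g / 4) (eps / 2)) in *.
  destruct (potential_gap rho (eps * eps / 4)) as [Dl [HDl Hedge]]; [lra | nra |].
  destruct (admissible_exists Dl ltac:(lra)) as [eta [Heta HetaU]].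
  destruct (lyap_trap eta rho Dl Heta ltac:(lra) ltac:(lra) Hedge HetaU) as [T [HT Htrap]].
  destruct (lyap_entry eta rho Dl Heta ltac:(lra) ltac:(lra) HetaU Hrec T) as [s [Hs [Hws HWs]]].
  exists s. intros t Ht.
  destruct (Htrap s Hs Hws HWs t ltac:(lra)) as [Hwt HWt].
  split; [lra|].
  pose proof (lyap_lower eta Dl t Heta HetaU ltac:(lra)).
  pose proof (potential_min (w t) (proj1 (Hw t ltac:(lra)))).
  apply Rabs_lt_between. pose proof (Rle_0_sqr (w1 t)). unfold Rsqr in *. split; nra.
Qed.

End DampedOscillator.

End Potential.

Lemma Rpower_exp t y : Rpower (exp t) y = exp (y * t).
Proof. unfold Rpower. rewrite ln_exp. reflexivity. Qed.

Lemma L_t_vanishes K beta k_inf : K_infty K beta k_inf ->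
  vanishes (fun t => L_t K beta t - k_inf).
Proof.
  intros [_ [_ [_ HK]]] eps Heps. destruct (HK eps Heps) as [R0 HR0].
  exists (ln (Rmax R0 1)). intros t Ht.
  pose proof (Rmax_l R0 1). pose proof (Rmax_r R0 1).
  assert (Rmax R0 1 < exp t) by (apply ln_lt_inv; [lra | apply exp_pos | rewrite ln_exp; exact Ht]).
  specialize (HR0 (exp t) ltac:(lra) (exp_pos t)).
  rewrite Rpower_exp in HR0. unfold L_t.
  replace (exp (- beta * t) * K (exp t)) with (K (exp t) / exp (beta * t)); [exact HR0|].
  replace (- beta * t) with (- (beta * t)) by ring. rewrite exp_Ropp. unfold Rdiv. ring.
Qed.

Lemma g_t_vanishes N f beta p : F_infty N f -> 2 + theta_t beta p < INR N ->
  vanishes (g_t f beta p).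
Proof.
  intros [_ [q [Hq [C [R0 HF]]]]] Hth.
  apply (vanishes_exp_decay (Rabs C) (q - 2 - theta_t beta p) (ln (Rmax R0 1))); [lra|].
  intros t Ht. pose proof (Rmax_l R0 1). pose proof (Rmax_r R0 1).
  assert (Rmax R0 1 < exp t) by (apply ln_lt_inv; [lra | apply exp_pos | rewrite ln_exp; exact Ht]).
  specialize (HF (exp t) ltac:(lra) (exp_pos t)). rewrite Rpower_exp in HF.
  unfold g_t. rewrite Rabs_mult, (Rabs_right (exp _)) by (left; apply exp_pos).
  pose proof (exp_pos ((2 + theta_t beta p) * t)). pose proof (exp_pos (- q * t)).
  pose proof (Rle_abs C).
  apply Rle_trans with (exp ((2 + theta_t beta p) * t) * (Rabs C * exp (- q * t))).
  - apply Rmult_le_compat_l; nra.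
  - replace (- (q - 2 - theta_t beta p) * t) with ((2 + theta_t beta p) * t + - q * t) by ring.
    rewrite exp_plus. right; ring.
Qed.

Lemma forcing_vanishes N K f beta k_inf p mu (w : R -> R) M T :
  K_infty K beta k_inf -> F_infty N f -> 0 <= p -> 2 + theta_t beta p < INR N ->
  (forall t, T < t -> 0 < w t <= M) ->
  vanishes (fun t => (L_t K beta t - k_inf) * Rpower (w t) p + g_t f beta p t * mu).
Proof.
  intros HK HF Hp Hth Hw. apply vanishes_plus.
  - apply (vanishes_mul_bounded _ _ (Rpower M p) T); [now apply L_t_vanishes|].
    intros t Ht. specialize (Hw t Ht). rewrite Rabs_right by (left; apply Rpower_pos).
    apply Rle_Rpower_l; lra.
  - apply (vanishes_mul_bounded _ _ (Rabs mu) T); [now apply (g_t_vanishes N) | intros; lra].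
Qed.

Lemma supercritical_exponent N beta p : (3 <= N)%nat -> beta > -2 -> p > p_S N beta ->
  1 < p /\ 0 < theta_t beta p /\ 2 * theta_t beta p < INR N - 2.
Proof.
  intros HN Hbeta Hp.
  assert (HN3 : 3 <= INR N) by (replace 3 with (INR 3) by (simpl; ring); apply le_INR, HN).
  unfold p_S in Hp.
  assert (Hp1 : (4 + 2 * beta) / (INR N - 2) < p - 1).
  { replace ((4 + 2 * beta) / (INR N - 2)) with ((INR N + 2 + 2 * beta) / (INR N - 2) - 1)
      by (field; lra). lra. }
  assert (0 < (4 + 2 * beta) / (INR N - 2)) by (apply Rdiv_lt_0_compat; lra).
  assert (4 + 2 * beta < (p - 1) * (INR N - 2)).
  { apply Rmult_lt_compat_r with (r := INR N - 2) in Hp1; [|lra].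
    replace ((4 + 2 * beta) / (INR N - 2) * (INR N - 2)) with (4 + 2 * beta) in Hp1 by (field; lra).
    lra. }
  unfold theta_t. split; [lra|]. split; [apply Rdiv_lt_0_compat; lra|].
  apply Rmult_lt_reg_r with (p - 1); [lra|].
  replace (2 * ((2 + beta) / (p - 1)) * (p - 1)) with (4 + 2 * beta) by (field; lra). lra.
Qed.

Lemma A_t_pow N beta p : 1 < p -> 0 < theta_t beta p * c_t N beta p ->
  Rpower (A_t N beta p) (p - 1) = theta_t beta p * c_t N beta p.
Proof.
  intros Hp Hpos. unfold A_t. rewrite Rpower_mult.
  replace (1 / (p - 1) * (p - 1)) with 1 by (field; lra). apply Rpower_1, Hpos.
Qed.

Lemma gamma_t_pow N beta p k_inf : 1 < p -> 0 < k_inf ->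
  Rpower (gamma_t N beta p k_inf) (p - 1) = Rpower (A_t N beta p) (p - 1) / k_inf.
Proof.
  intros Hp Hk. unfold gamma_t.
  rewrite <- Rpower_mult_distr by apply Rpower_pos. rewrite Rpower_mult.
  replace (- (1 / (p - 1)) * (p - 1)) with (Ropp 1) by (field; lra).
  rewrite Rpower_Ropp, Rpower_1 by exact Hk. field. lra.
Qed.

Theorem lemma6p8 (N : nat) (mu : R) (K f : R -> R) (beta k_inf p t1 : R)
  (w w' w'' : R -> R) :
  (3 <= N)%nat ->
  0 <= mu ->
  K_infty K beta k_inf ->
  F_infty N f ->
  p > p_S N beta ->
  (forall t, t > t1 -> is_derive w t (w' t) /\ is_derive w' t (w'' t)
                       /\ continuous w'' t) ->
  (forall t, t > t1 -> w t > 0) ->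
  (forall t, t > t1 ->
     w'' t + a_t N beta p * w' t - Rpower (A_t N beta p) (p - 1) * w t
     + L_t K beta t * Rpower (w t) p + mu * g_t f beta p t = 0) ->
  limsup_pos_finite w ->
  is_lim w p_infty (gamma_t N beta p k_inf) /\ is_lim w' p_infty 0.
Proof.
  intros HN _ HK HF Hp Hder Hwpos Heq [[Mw [Tw HMw]] Hrec].
  pose proof HK as [Hbeta [Hk _]].
  destruct (supercritical_exponent N beta p HN Hbeta Hp) as [Hp1 [Hth Hth2]].
  assert (Hb : 0 < Rpower (A_t N beta p) (p - 1))
    by (rewrite A_t_pow; unfold c_t; nra).
  assert (Hw : forall t, Rmax t1 Tw < t -> 0 < w t <= Rmax Mw 1).
  { intros t Ht. pose proof (Rmax_l t1 Tw). pose proof (Rmax_r t1 Tw). pose proof (Rmax_l Mw 1).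
    split; [apply Hwpos | apply Rle_trans with Mw; [apply HMw|]]; lra. }
  set (e t := (L_t K beta t - k_inf) * Rpower (w t) p + g_t f beta p t * mu).
  assert (He : vanishes e)
    by (apply (forcing_vanishes N K f beta k_inf p mu w (Rmax Mw 1) (Rmax t1 Tw) HK HF);
        [lra | lra | exact Hw]).
  assert (Hlim : forall eps, 0 < eps -> exists T, forall t, T < t ->
    Rabs (w t - gamma_t N beta p k_inf) < eps /\ Rabs (w' t) < eps).
  { apply (converges_to_equilibrium _ k_inf p _ Hb Hk Hp1
      ltac:(apply Rmult_lt_0_compat; apply Rpower_pos) (gamma_t_pow N beta p k_inf Hp1 Hk)
      (a_t N beta p) (Rmax Mw 1) (Rmax t1 Tw) w w' e ltac:(unfold a_t; lra));
      [|exact Hw | exact He | exact Hrec].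
    intros t Ht. pose proof (Rmax_l t1 Tw). destruct (Hder t ltac:(lra)) as [Hw' [Hw'' _]].
    split; [exact Hw'|]. replace (- a_t N beta p * w' t - force _ _ _ (w t) - e t) with (w'' t);
      [exact Hw''|]. specialize (Heq t ltac:(lra)). unfold force, e. lra. }
  split; apply is_lim_spec; intros eps; destruct (Hlim eps (cond_pos eps)) as [T HT];
    exists T; intros t Ht; [|rewrite Rminus_0_r]; apply HT; exact Ht.
Qed.
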